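(* Let $q$ be a prime power. For $1\leq i\leq k$, let $b_i,\delta\in\mathbb{F}_{q^2}$ and let $s_i$ be positive integers. Let $$P_1(x)=\sum_{i=1}^{k}b_i(x^q+x+\delta)^{s_i}-x,\qquad P_2(x)=\sum_{i=1}^{k}b_i^q(x^q+x+\delta)^{qs_i}-x .$$ Then $P_1(x)$ is a permutation polynomial of $\mathbb{F}_{q^2}$ if and only if $P_2(x)$ is a permutation polynomial of $\mathbb{F}_{q^2}$. Moreover, if $P_1(x)$ permutes $\mathbb{F}_{q^2}$, then $$P_1^{-1}(x)+x=\left(P_2^{-1}(x)+x\right)^q,$$ where $P_1^{-1}(x)$ and $P_2^{-1}(x)$ are the compositional inverses of $P_1(x)$ and $P_2(x)$ over $\mathbb{F}_{q^2}$.
   Context: A polynomial $f\in\mathbb{F}_{Q}[x]$ is a permutation polynomial of $\mathbb{F}_Q$ if the map $c\mapsto f(c)$ is a bijection of $\mathbb{F}_Q$. Its compositional inverse $f^{-1}(x)$ is the unique polynomial with $f(f^{-1}(x))\equiv f^{-1}(f(x))\equiv x \pmod{x^Q-x}$; identities between polynomials are understood as identities of the induced functions on $\mathbb{F}_Q$ (i.e. modulo $x^Q-x$). *)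

From mathcomp Require Import all_boot all_order all_algebra all_field.
Set Implicit Arguments. Unset Strict Implicit. Unset Printing Implicit Defensive.
Import GRing.Theory.
Local Open Scope ring_scope.

Definition is_perm_poly (F : finFieldType) (f : {poly F}) : Prop :=
  bijective (fun c : F => f.[c]).

(* g is a compositional inverse of f over F: f(g(x)) = g(f(x)) = x
   as induced functions on F (i.e. modulo x^|F| - x). *)
Definition is_comp_inv (F : finFieldType) (f g : {poly F}) : Prop :=
  forall c : F, f.[g.[c]] = c /\ g.[f.[c]] = c.

From mathcomp Require Import all_boot all_order all_algebra all_field.
Set Implicit Arguments.
Unset Strict Implicit.
Unset Printing Implicit Defensive.
Import GRing.Theory.
Local Open Scope ring_scope.

(* Write phi x = x^q, an additive involution of F_{q^2}, and T x = phi x + x.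
   Then P1 x = h (T x) - x and P2 x = phi (h (T x)) - x with
   h z = sum_i b_i (z + delta)^s_i.  For each y the involution
   x |-> phi (x + y) - y preserves T, and it maps the solutions of P2 x = y
   onto those of P1 x = y.  So P1 and P2 are bijective together, and
   P1^-1 y = phi (P2^-1 y + y) - y. *)

Section FibreTransport.
Variables (T : eqType) (f1 f2 : T -> T) (t : T -> T -> T).
Hypothesis tK : forall y, involutive (t y).
Hypothesis fibre_t : forall y x, (f1 (t y x) == y) = (f2 x == y).

Lemma fibre_inverse_can (g2 : T -> T) :
  cancel g2 f2 -> cancel (fun y => t y (g2 y)) f1.
Proof. by move=> g2K y; apply/eqP; rewrite fibre_t g2K. Qed.

Lemma fibre_inverse (g1 g2 : T -> T) :
  cancel f1 g1 -> cancel g2 f2 -> g1 =1 (fun y => t y (g2 y)).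
Proof. by move=> f1K g2K y; rewrite -{1}(fibre_inverse_can g2K y) f1K. Qed.

Lemma fibre_bij : bijective f2 -> bijective f1.
Proof.
case=> g2 f2K g2K; exists (fun y => t y (g2 y)); last exact: fibre_inverse_can.
move=> x; have f2_tx : f2 (t (f1 x) x) = f1 x by apply/eqP; rewrite -fibre_t tK.
by rewrite -{2}f2_tx f2K tK.
Qed.

End FibreTransport.

Section TraceMaps.
Variables (V : zmodType) (phi : V -> V) (h : V -> V).
Hypothesis phiD : {morph phi : x y / x + y}.
Hypothesis phiK : involutive phi.

Let phiB x y : phi (x - y) = phi x - phi y.
Proof. by rewrite -[in phi x](subrK y x) phiD addrK. Qed.

Definition trace_map x := h (phi x + x) - x.
Definition trace_map_conj x := phi (h (phi x + x)) - x.
Definition twist y x := phi (x + y) - y.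

Lemma twistK y : involutive (twist y).
Proof. by move=> x; rewrite /twist subrK phiK addrK. Qed.

Lemma trace_twist y x : phi (twist y x) + twist y x = phi x + x.
Proof.
rewrite /twist phiB phiK phiD.
rewrite addrC -!addrA; congr (_ + _).
by rewrite [x + _]addrC [- y + _]addrA addKr addNKr.
Qed.

Lemma trace_map_twist y x :
  (trace_map (twist y x) == y) = (trace_map_conj x == y).
Proof.
rewrite /trace_map /trace_map_conj trace_twist /twist !subr_eq.
rewrite [y + (_ - y)]addrC subrK [y + x]addrC.
by rewrite -(inj_eq (can_inj phiK)) phiK.
Qed.

Lemma trace_map_conj_twist y x :
  (trace_map_conj (twist y x) == y) = (trace_map x == y).
Proof. by rewrite -{2}(twistK y x) trace_map_twist. Qed.

Lemma bij_trace_map : bijective trace_map <-> bijective trace_map_conj.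
Proof.
split; apply: fibre_bij twistK _.
  exact: trace_map_conj_twist.
exact: trace_map_twist.
Qed.

Lemma trace_map_inverse (g1 g2 : V -> V) :
  cancel trace_map g1 -> cancel g2 trace_map_conj ->
  forall y, g1 y + y = phi (g2 y + y).
Proof.
move=> trK g2K y.
by rewrite (fibre_inverse trace_map_twist trK g2K) /twist subrK.
Qed.

End TraceMaps.

Lemma card_sqrt_pchar_nat (F : finFieldType) (p e : nat) :
  prime p -> #|F| = ((p ^ e) ^ 2)%N -> [pchar F].-nat (p ^ e)%N.
Proof.
move=> p_pr cardF.
have pF : p \in [pchar F] by apply: (card_finPcharP _ p_pr); rewrite cardF -expnM.
by rewrite (eq_pnat _ (pcharf_eq pF)) pnatX pnat_id.
Qed.

Lemma expf_sqrt_cardK (F : finFieldType) (q : nat) :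
  #|F| = (q ^ 2)%N -> involutive (fun a : F => a ^+ q).
Proof. by move=> cardF a; rewrite -exprM -[(q * q)%N]/(q ^ 2)%N -cardF expf_card. Qed.

Theorem proposition3p1 (F : finFieldType) (q : nat)
  (hq : exists p e : nat, [/\ prime p, (0 < e)%N & q = p ^ e]%N)
  (hF : #|F| = (q ^ 2)%N)
  (k : nat) (b : 'I_k -> F) (s : 'I_k -> nat) (hs : forall i, (0 < s i)%N)
  (delta : F) :
  let P1 : {poly F} :=
    \sum_(i < k) b i *: ('X^q + 'X + delta%:P) ^+ s i - 'X in
  let P2 : {poly F} :=
    \sum_(i < k) (b i ^+ q) *: ('X^q + 'X + delta%:P) ^+ (q * s i) - 'X in
  (is_perm_poly P1 <-> is_perm_poly P2) /\
  (is_perm_poly P1 ->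
     forall g1 g2 : {poly F}, is_comp_inv P1 g1 -> is_comp_inv P2 g2 ->
     forall c : F, g1.[c] + c = (g2.[c] + c) ^+ q).
Proof.
move=> P1 P2.
have q_pchar : [pchar F].-nat q.
  by case: hq hF => p [e [p_pr _ ->]]; exact: card_sqrt_pchar_nat.
pose phi (a : F) := a ^+ q.
pose h (z : F) := \sum_(i < k) b i * (z + delta) ^+ s i.
have phiD : {morph phi : x y / x + y} by move=> x y; exact: exprDn_pchar.
have phiK : involutive phi := expf_sqrt_cardK hF.
have P1E : (fun c => P1.[c]) =1 trace_map phi h.
  move=> c; rewrite /P1 hornerD horner_sum hornerN hornerX /trace_map /h.
  by congr (_ - _); apply: eq_bigr => i _; rewrite !hornerE.
have P2E : (fun c => P2.[c]) =1 trace_map_conj phi h.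
  move=> c; rewrite /P2 hornerD horner_sum hornerN hornerX /trace_map_conj /h.
  have phi0 : phi 0 = 0 by apply: (@addrI _ (phi 0)); rewrite -phiD !addr0.
  rewrite (big_morph phi phiD phi0); congr (_ - _); apply: eq_bigr => i _.
  by rewrite !hornerE /phi exprMn -exprM mulnC.
split.
  split=> /eq_bij bij.
    exact/(eq_bij _ (fsym P2E))/(bij_trace_map h phiD phiK)/bij.
  exact/(eq_bij _ (fsym P1E))/(bij_trace_map h phiD phiK)/bij.
move=> _ g1 g2 g1P1 g2P2 c.
apply: (trace_map_inverse (h := h) phiD phiK) => x.
  by rewrite -P1E; case: (g1P1 x).
by rewrite -P2E; case: (g2P2 x).
Qed.
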